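(* Let $\pi_1,\pi_2$ be two policies with the same information set $\mathcal{I}$ in a finite-horizon POMDP $\mathcal{M}$, and let $j\in\{\mathcal{S},\mathcal{O}\}$. Let $\mathcal{T}_j(\pi_1,\pi_2)$ be the set of length-$T$ trajectories $\tau_j$ (over states if $j=\mathcal{S}$, over observations if $j=\mathcal{O}$) that have positive probability under $p^{\pi_1}$ or under $p^{\pi_2}$, and let $\tau_j^\star\in\arg\max_{\tau\in\mathcal{T}_j(\pi_1,\pi_2)}H(d(\tau))$. Then $$\big|J^{j}(\pi_1)-J^{j}(\pi_2)\big|\le T\,H(d(\tau_j^\star))\,d^{TV}(\pi_1,\pi_2),$$ where $d^{TV}(\pi_1,\pi_2):=\sup_{i\in\mathcal{I}}d^{TV}\big(\pi_1(\cdot\mid i),\pi_2(\cdot\mid i)\big)$.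
   Context: A finite-horizon POMDP $\mathcal{M}=(\mathcal{S},\mathcal{A},\mathcal{O},\mathbb{P},\mathbb{O},T,\mu)$ has finite state, action and observation sets, transition kernel $\mathbb{P}(s'\mid s,a)$, observation kernel $\mathbb{O}(o\mid s)$, horizon $T$, initial distribution $\mu$. Under a policy $\pi:\mathcal{I}\to\Delta(\mathcal{A})$: $s_1\sim\mu$, $o_t\sim\mathbb{O}(\cdot\mid s_t)$ for $t\le T$, and for $t<T$, $a_t\sim\pi(\cdot\mid i_t)$, $s_{t+1}\sim\mathbb{P}(\cdot\mid s_t,a_t)$, where $i_t$ is a deterministic function of the history $(o_1,a_1,\dots,a_{t-1},o_t)$. $p^\pi$ is the law of the joint trajectory, with state trajectory $\tau_{\mathcal{S}}=(s_1,\dots,s_T)$ and observation trajectory $\tau_{\mathcal{O}}=(o_1,\dots,o_T)$. For a sequence $x=(x_1,\dots,x_T)$ over a finite set, $d(x)$ is its empirical distribution $d_y(x)=\frac1T\sum_t\mathbf{1}\{x_t=y\}$ and $H$ is Shannon entropy (natural log). Objectives: $J^{\mathcal{S}}(\pi)=\mathbb{E}_{p^\pi}[H(d(\tau_{\mathcal{S}}))]$ (Maximum State Entropy) and $J^{\mathcal{O}}(\pi)=\mathbb{E}_{p^\pi}[H(d(\tau_{\mathcal{O}}))]$ (Maximum Observation Entropy). $d^{TV}(p,q)=\frac12\sum_x|p(x)-q(x)|$ is total variation distance. *)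

From mathcomp Require Import all_boot all_order all_algebra.
From mathcomp Require Import reals exp.
Set Implicit Arguments. Unset Strict Implicit. Unset Printing Implicit Defensive.
Import Order.TTheory GRing.Theory Num.Theory.
Local Open Scope ring_scope.

(* Horizon T = n.+1 (T >= 1).  Time t (0-indexed) ranges over 'I_n.+1 for
   states/observations and over 'I_n for actions (actions a_1..a_{T-1}). *)

Definition is_dist (R : realType) (Y : finType) (p : Y -> R) : Prop :=
  (forall y, 0 <= p y) /\ \sum_(y : Y) p y = 1.

(* Shannon entropy, natural log (0 * ln 0 = 0) *)
Definition entropy (R : realType) (Y : finType) (p : Y -> R) : R :=
  - \sum_(y : Y) p y * ln (p y).

Definition empirical (R : realType) (Y : finType) (n : nat)
    (x : {ffun 'I_n.+1 -> Y}) : Y -> R :=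
  fun y => #|[set t | x t == y]|%:R / n.+1%:R.

Definition tv (R : realType) (Y : finType) (p q : Y -> R) : R :=
  2^-1 * \sum_(y : Y) `|p y - q y|.

Definition policy_tv (R : realType) (I A : finType) (pi1 pi2 : I -> A -> R) : R :=
  \big[Num.max/0]_(i : I) tv (pi1 i) (pi2 i).

(* history at action time t : (o_1,a_1,...,o_{t-1},a_{t-1}) together with o_t *)
Definition history (O A : finType) (n : nat) (o : {ffun 'I_n.+1 -> O})
    (a : {ffun 'I_n -> A}) (t : 'I_n) : seq (O * A) * O :=
  ([seq (o (widen_ord (leqnSn n) k), a k) | k : 'I_n <- [seq k : 'I_n <- enum 'I_n | (k < t)%N]],
   o (widen_ord (leqnSn n) t)).

(* probability p^pi of a joint trajectory (s, o, a).  The information state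
   is i_t = info (history), a deterministic function of the history. *)
Definition traj_prob (R : realType) (S A O I : finType) (n : nat)
    (mu : S -> R) (P : S -> A -> S -> R) (Obs : S -> O -> R)
    (info : seq (O * A) -> O -> I) (pi : I -> A -> R)
    (s : {ffun 'I_n.+1 -> S}) (o : {ffun 'I_n.+1 -> O}) (a : {ffun 'I_n -> A}) : R :=
  mu (s ord0) * (\prod_(t : 'I_n.+1) Obs (s t) (o t)) *
  \prod_(t : 'I_n)
     (pi (info (history o a t).1 (history o a t).2) (a t) *
      P (s (widen_ord (leqnSn n) t)) (a t) (s (lift ord0 t))).

Definition state_marg (R : realType) (S A O I : finType) (n : nat)
    mu P Obs info (pi : I -> A -> R) (s : {ffun 'I_n.+1 -> S}) : R :=
  \sum_(o : {ffun 'I_n.+1 -> O}) \sum_(a : {ffun 'I_n -> A})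
     traj_prob (R:=R) mu P Obs info pi s o a.

Definition obs_marg (R : realType) (S A O I : finType) (n : nat)
    mu P Obs info (pi : I -> A -> R) (o : {ffun 'I_n.+1 -> O}) : R :=
  \sum_(s : {ffun 'I_n.+1 -> S}) \sum_(a : {ffun 'I_n -> A})
     traj_prob (R:=R) mu P Obs info pi s o a.

Definition J_state (R : realType) (S A O I : finType) (n : nat)
    mu P Obs info (pi : I -> A -> R) : R :=
  \sum_(s : {ffun 'I_n.+1 -> S}) \sum_(o : {ffun 'I_n.+1 -> O})
  \sum_(a : {ffun 'I_n -> A})
     traj_prob (R:=R) mu P Obs info pi s o a * entropy (empirical R s).

Definition J_obs (R : realType) (S A O I : finType) (n : nat)
    mu P Obs info (pi : I -> A -> R) : R :=
  \sum_(s : {ffun 'I_n.+1 -> S}) \sum_(o : {ffun 'I_n.+1 -> O})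
  \sum_(a : {ffun 'I_n -> A})
     traj_prob (R:=R) mu P Obs info pi s o a * entropy (empirical R o).

(* Couple the two policies through the overlap kernel q = min(pi1, pi2).  The
   trajectory weights under q form a sub-probability dominated by both p^pi1 and
   p^pi2, and every row of q has mass 1 - tv(pi1 i, pi2 i) >= 1 - d, so by
   induction over the T - 1 action steps and Bernoulli's inequality the total
   q-mass is at least (1 - d)^(T-1) >= 1 - (T-1) d.  Each J(pi_k) lies between
   the q-weighted expectation E_q and E_q + M (1 - q-mass), where
   M = H(d(tau_star)) bounds the entropy on the joint support; hence
   |J(pi1) - J(pi2)| <= M (T-1) d <= T M d. *)

From mathcomp Require Import all_boot all_order all_algebra.
From mathcomp Require Import reals exp ring lra.
Set Implicit Arguments. Unset Strict Implicit. Unset Printing Implicit Defensive.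
Import Order.TTheory GRing.Theory Num.Theory.
Local Open Scope ring_scope.

Lemma bernoulli_ineq (R : realDomainType) (x : R) (n : nat) :
  -1 <= x -> 1 + n%:R * x <= (1 + x) ^+ n.
Proof.
move=> x_ge_m1; elim: n => [|n IHn]; first by rewrite mul0r addr0 expr0.
have x1_ge0 : 0 <= 1 + x by lra.
have step : (1 + x) * (1 + n%:R * x) <= (1 + x) * (1 + x) ^+ n.
  exact: ler_wpM2l.
have nx2_ge0 : 0 <= n%:R * x * x by rewrite -mulrA mulr_ge0 // -expr2 sqr_ge0.
rewrite exprS -addn1 natrD; nra.
Qed.

Section FiniteSums.
Variable R : realFieldType.

Lemma le_sum_term (T : finType) (G : T -> R) (i : T) :
  (forall j, 0 <= G j) -> G i <= \sum_j G j.
Proof. by move=> G_ge0; rewrite (bigD1 i) //= lerDl sumr_ge0. Qed.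

Lemma sum_triple (T1 T2 T3 : finType) (F : T1 -> T2 -> T3 -> R) :
  \sum_x \sum_y \sum_z F x y z = \sum_(u : T1 * T2 * T3) F u.1.1 u.1.2 u.2.
Proof.
rewrite -(pair_bigA _ (fun v z => F v.1 v.2 z)) /=.
exact: (pair_bigA _ (fun x y => \sum_z F x y z)).
Qed.

Variable T : finType.

Lemma sum_sandwich (p q f : T -> R) (M : R) :
  (forall x, 0 <= q x) -> (forall x, q x <= p x) -> \sum_x p x = 1 ->
  (forall x, 0 <= f x) -> (forall x, 0 < p x -> f x <= M) ->
  \sum_x q x * f x <= \sum_x p x * f x <= \sum_x q x * f x + M * (1 - \sum_x q x).
Proof.
move=> q_ge0 q_le_p p1 f_ge0 f_le; apply/andP; split.
  by apply: ler_sum => x _; apply: ler_wpM2r.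
have gap : \sum_x (p x - q x) * f x <= \sum_x (p x - q x) * M.
  apply: ler_sum => x _; have [p_le0 | p_gt0] := lerP (p x) 0.
    have pq0 : p x - q x = 0 by have := q_ge0 x; have := q_le_p x; lra.
    by rewrite pq0 !mul0r.
  by apply: ler_wpM2l; [rewrite subr_ge0 | exact: f_le].
move: gap; under eq_bigr => x _ do rewrite mulrBl.
rewrite -mulr_suml !sumrB p1; lra.
Qed.

Lemma sum_gap_le (p1 p2 q f : T -> R) (M : R) :
  (forall x, 0 <= q x) -> (forall x, q x <= p1 x) -> (forall x, q x <= p2 x) ->
  \sum_x p1 x = 1 -> \sum_x p2 x = 1 -> (forall x, 0 <= f x) ->
  (forall x, 0 < p1 x \/ 0 < p2 x -> f x <= M) ->
  `|\sum_x p1 x * f x - \sum_x p2 x * f x| <= M * (1 - \sum_x q x).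
Proof.
move=> q_ge0 q_le1 q_le2 s1 s2 f_ge0 f_le.
have /andP[lo1 hi1] := sum_sandwich q_ge0 q_le1 s1 f_ge0 (fun x h => f_le x (or_introl h)).
have /andP[lo2 hi2] := sum_sandwich q_ge0 q_le2 s2 f_ge0 (fun x h => f_le x (or_intror h)).
rewrite ler_norml; apply/andP; split; lra.
Qed.

End FiniteSums.

Section Distributions.
Variables (R : realType) (Y : finType).
Implicit Types p q : Y -> R.

Lemma tv_le1 p q : is_dist p -> is_dist q -> tv p q <= 1.
Proof.
move=> [p_ge0 p1] [q_ge0 q1].
have : \sum_y `|p y - q y| <= \sum_y p y + \sum_y q y.
  rewrite -big_split; apply: ler_sum => y _.
  by apply: le_trans (ler_normB _ _) _; rewrite !ger0_norm.
rewrite /tv p1 q1; lra.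
Qed.

Lemma sum_min_dist p q : is_dist p -> is_dist q ->
  \sum_y Num.min (p y) (q y) = 1 - tv p q.
Proof.
move=> [_ p1] [_ q1].
have min2 y : 2 * Num.min (p y) (q y) = p y + q y - `|p y - q y|.
  by case: (lerP (p y) (q y)) => _; lra.
have : 2 * \sum_y Num.min (p y) (q y) =
       \sum_y p y + \sum_y q y - \sum_y `|p y - q y|.
  by rewrite mulr_sumr -big_split -sumrB; apply: eq_bigr => y _.
rewrite /tv p1 q1; lra.
Qed.

Lemma entropy_ge0 p : (forall y, 0 <= p y <= 1) -> 0 <= entropy p.
Proof.
move=> p01; rewrite /entropy oppr_ge0; apply: sumr_le0 => y _.
by case/andP: (p01 y) => p_ge0 p_le1; rewrite mulr_ge0_le0 // ln_le0.
Qed.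

Lemma empirical_in01 n (x : {ffun 'I_n.+1 -> Y}) y :
  0 <= empirical R x y <= 1.
Proof.
rewrite /empirical divr_ge0 ?ler0n //= ler_pdivrMr ?ltr0n // mul1r ler_nat.
by apply: leq_trans (max_card _) _; rewrite card_ord.
Qed.

End Distributions.

Section PolicyTV.
Variables (R : realType) (I A : finType) (pi1 pi2 : I -> A -> R).

Lemma policy_tv_ge i : tv (pi1 i) (pi2 i) <= policy_tv pi1 pi2.
Proof. exact: le_bigmax. Qed.

Lemma policy_tv_ge0 : 0 <= policy_tv pi1 pi2.
Proof. exact: bigmax_ge_id. Qed.

Lemma policy_tv_le1 : (forall i, is_dist (pi1 i)) -> (forall i, is_dist (pi2 i)) ->
  policy_tv pi1 pi2 <= 1.
Proof. by move=> d1 d2; apply: bigmax_le => // i _; apply: tv_le1. Qed.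

End PolicyTV.

Section FfunRcons.
Variable X : finType.

Definition ffun_rcons m (f : {ffun 'I_m -> X}) (x : X) : {ffun 'I_m.+1 -> X} :=
  [ffun i => if unlift ord_max i is Some j then f j else x].

Lemma ffun_rcons_val m (f : {ffun 'I_m -> X}) x (i : 'I_m.+1) (j : 'I_m) :
  val i = val j -> ffun_rcons f x i = f j.
Proof.
move=> ij; have -> : i = lift ord_max j.
  by apply/val_inj; rewrite ij /= /bump leqNgt ltn_ord.
by rewrite ffunE liftK.
Qed.

Lemma ffun_rcons_last m (f : {ffun 'I_m -> X}) x : ffun_rcons f x ord_max = x.
Proof. by rewrite ffunE unlift_none. Qed.

Lemma sum_ffun_rcons (R : nmodType) m (G : {ffun 'I_m.+1 -> X} -> R) :
  \sum_(F : {ffun 'I_m.+1 -> X}) G F =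
  \sum_(f : {ffun 'I_m -> X}) \sum_(x : X) G (ffun_rcons f x).
Proof.
rewrite pair_bigA /= (reindex (fun u => ffun_rcons u.1 u.2)) //=.
exists (fun F => ([ffun j => F (widen_ord (leqnSn m) j)], F ord_max)).
- move=> [f x] _ /=; rewrite ffun_rcons_last; congr pair.
  by apply/ffunP => j; rewrite ffunE (ffun_rcons_val _ _ (j := j)).
- move=> F _; apply/ffunP => i; rewrite ffunE.
  case: (unliftP ord_max i) => [j ->|->] //=.
  by rewrite ffunE; congr (F _); apply/val_inj; rewrite /= /bump leqNgt ltn_ord.
Qed.

Lemma sum_ffun_ord1 (R : nmodType) (G : X -> R) :
  \sum_(f : {ffun 'I_1 -> X}) G (f ord0) = \sum_x G x.
Proof.
rewrite (reindex (fun x => [ffun=> x])) /=.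
  by apply: eq_bigr => x _; rewrite ffunE.
exists (fun f => f ord0); first by move=> x _; rewrite ffunE.
by move=> f _; apply/ffunP => i; rewrite ffunE (ord1 i).
Qed.

End FfunRcons.

Section Trajectories.
Variables (R : realType) (S A O I : finType).
Variables (mu : S -> R) (P : S -> A -> S -> R) (Obs : S -> O -> R).
Variable info : seq (O * A) -> O -> I.
Hypothesis mu_dist : is_dist mu.
Hypothesis P_dist : forall s a, is_dist (P s a).
Hypothesis Obs_dist : forall s, is_dist (Obs s).

(* What [history] would record at a further action time [n]. *)
Definition full_history n (o : {ffun 'I_n.+1 -> O}) (a : {ffun 'I_n -> A}) :=
  ([seq (o (widen_ord (leqnSn n) k), a k) | k <- enum 'I_n], o ord_max).

Lemma history_rcons_widen n (o : {ffun 'I_n.+1 -> O}) (a : {ffun 'I_n -> A}) y z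
    (t : 'I_n) :
  history (ffun_rcons o y) (ffun_rcons a z) (widen_ord (leqnSn n) t) = history o a t.
Proof.
rewrite /history; congr pair; last exact: ffun_rcons_val.
rewrite enum_ordSr filter_rcons.
have -> : (nat_of_ord (@ord_max n) < widen_ord (leqnSn n) t)%N = false.
  by apply/negbTE; rewrite -leqNgt /= ltnW.
rewrite filter_map -map_comp; apply: eq_map => k /=.
by rewrite (ffun_rcons_val _ _ (j := widen_ord (leqnSn n) k)) // (ffun_rcons_val _ _ (j := k)).
Qed.

Lemma history_rcons_last n (o : {ffun 'I_n.+1 -> O}) (a : {ffun 'I_n -> A}) y z :
  history (ffun_rcons o y) (ffun_rcons a z) ord_max = full_history o a.
Proof.
rewrite /history /full_history; congr pair; last exact: ffun_rcons_val.
rewrite enum_ordSr filter_rcons /= ltnn filter_map -map_comp.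
rewrite (all_filterP _); last by apply/allP => k _ /=.
apply: eq_map => k /=.
by rewrite (ffun_rcons_val _ _ (j := widen_ord (leqnSn n) k)) // (ffun_rcons_val _ _ (j := k)).
Qed.

Lemma traj_prob_rcons n (w : I -> A -> R) (s : {ffun 'I_n.+1 -> S})
    (o : {ffun 'I_n.+1 -> O}) (a : {ffun 'I_n -> A}) x y z :
  traj_prob mu P Obs info w (ffun_rcons s x) (ffun_rcons o y) (ffun_rcons a z) =
  traj_prob mu P Obs info w s o a * Obs x y *
  (w (info (full_history o a).1 (full_history o a).2) z * P (s ord_max) z x).
Proof.
rewrite /traj_prob [\prod_(t < n.+2) _]big_ord_recr.
rewrite [\prod_(t < n.+1) (w _ _ * _)]big_ord_recr.
rewrite (eq_bigr (fun t : 'I_n => w (info (history o a t).1 (history o a t).2) (a t) *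
                   P (s (widen_ord (leqnSn n) t)) (a t) (s (lift ord0 t)))); last first.
  move=> t _; rewrite history_rcons_widen (ffun_rcons_val _ _ (j := t)) //.
  rewrite (ffun_rcons_val _ _ (j := widen_ord (leqnSn n) t)) //.
  by rewrite (ffun_rcons_val _ _ (j := lift ord0 t)) ?lift0.
rewrite (eq_bigr (fun i : 'I_n.+1 => Obs (s i) (o i))); last first.
  by move=> i _; rewrite (ffun_rcons_val _ _ (j := i)) // (ffun_rcons_val _ _ (j := i)).
rewrite !ffun_rcons_last history_rcons_last.
rewrite (ffun_rcons_val _ _ (i := ord0) (j := ord0)) //.
rewrite (ffun_rcons_val _ _ (i := widen_ord _ ord_max) (j := ord_max)) //.
have -> : lift ord0 (@ord_max n) = ord_max by apply/val_inj.
by rewrite ffun_rcons_last /=; ring.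
Qed.

Definition traj_mass n (w : I -> A -> R) : R :=
  \sum_(s : {ffun 'I_n.+1 -> S}) \sum_(o : {ffun 'I_n.+1 -> O})
  \sum_(a : {ffun 'I_n -> A}) traj_prob mu P Obs info w s o a.

Lemma traj_mass0 w : traj_mass 0 w = 1.
Proof.
rewrite /traj_mass -(proj2 mu_dist) -(sum_ffun_ord1 mu).
apply: eq_bigr => s _; rewrite -[RHS]mulr1 -(proj2 (Obs_dist (s ord0))) mulr_sumr.
rewrite -(sum_ffun_ord1 (fun y => mu (s ord0) * Obs (s ord0) y)).
apply: eq_bigr => o _; rewrite /traj_prob.
under eq_bigr => a _ do rewrite big_ord1 big_ord0 mulr1.
by rewrite sumr_const card_ffun card_ord expn0.
Qed.

Lemma traj_mass_succ n w :
  traj_mass n.+1 w =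
  \sum_(s : {ffun 'I_n.+1 -> S}) \sum_(o : {ffun 'I_n.+1 -> O})
  \sum_(a : {ffun 'I_n -> A}) traj_prob mu P Obs info w s o a *
    \sum_z w (info (full_history o a).1 (full_history o a).2) z.
Proof.
rewrite /traj_mass sum_ffun_rcons; apply: eq_bigr => s _.
under eq_bigr => x _ do rewrite sum_ffun_rcons.
rewrite exchange_big; apply: eq_bigr => o _.
under eq_bigr => x _ do under eq_bigr => y _ do rewrite sum_ffun_rcons.
under eq_bigr => x _ do under eq_bigr => y _ do under eq_bigr => a _ do
  under eq_bigr => z _ do rewrite traj_prob_rcons.
under eq_bigr => x _ do rewrite exchange_big.
rewrite exchange_big; apply: eq_bigr => a _.
set t := traj_prob _ _ _ _ _ _ _ _; set h := info _ _.
transitivity (\sum_x \sum_z t * (w h z * P (s ord_max) z x)).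
  apply: eq_bigr => x _; rewrite exchange_big; apply: eq_bigr => z _.
  by rewrite -mulr_suml -mulr_sumr (proj2 (Obs_dist x)) mulr1.
rewrite exchange_big mulr_sumr; apply: eq_bigr => z _.
by rewrite -!mulr_sumr (proj2 (P_dist _ _)) mulr1.
Qed.

Section Kernels.
Variables w v : I -> A -> R.
Hypothesis w_ge0 : forall i b, 0 <= w i b.

Lemma traj_prob_ge0 n s o a : 0 <= traj_prob (n := n) mu P Obs info w s o a.
Proof.
rewrite /traj_prob !mulr_ge0 ?(proj1 mu_dist) //.
  by apply: prodr_ge0 => t _; apply: (proj1 (Obs_dist _)).
by apply: prodr_ge0 => t _; rewrite mulr_ge0 ?w_ge0 ?(proj1 (P_dist _ _)).
Qed.

Lemma traj_prob_le_kernel n s o a : (forall i b, w i b <= v i b) ->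
  traj_prob (n := n) mu P Obs info w s o a <= traj_prob mu P Obs info v s o a.
Proof.
move=> w_le_v; rewrite /traj_prob; apply: ler_wpM2l.
  by rewrite mulr_ge0 ?(proj1 mu_dist) //; apply: prodr_ge0 => t _; apply: (proj1 (Obs_dist _)).
apply: ler_prod => t _; rewrite mulr_ge0 ?w_ge0 ?(proj1 (P_dist _ _)) //=.
by apply: ler_wpM2r; [exact: (proj1 (P_dist _ _)) | exact: w_le_v].
Qed.

Lemma traj_mass_ge_exp n (c : R) : 0 <= c -> (forall i, c <= \sum_b w i b) ->
  c ^+ n <= traj_mass n w.
Proof.
move=> c_ge0 w_ge_c; elim: n => [|n IHn]; first by rewrite traj_mass0 expr0.
rewrite traj_mass_succ exprSr.
apply: le_trans (_ : traj_mass n w * c <= _); first exact: ler_wpM2r.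
rewrite /traj_mass !mulr_suml; apply: ler_sum => s _; rewrite mulr_suml.
apply: ler_sum => o _; rewrite mulr_suml; apply: ler_sum => a _.
by rewrite ler_wpM2l ?traj_prob_ge0.
Qed.

Lemma state_marg_gt0 n s o a : 0 < traj_prob (n := n) mu P Obs info w s o a ->
  0 < state_marg mu P Obs info w s.
Proof.
move=> /lt_le_trans; apply; rewrite /state_marg.
apply: le_trans (le_sum_term o _); first by apply: le_sum_term => a'; exact: traj_prob_ge0.
by move=> o'; apply: sumr_ge0 => a' _; exact: traj_prob_ge0.
Qed.

Lemma obs_marg_gt0 n s o a : 0 < traj_prob (n := n) mu P Obs info w s o a ->
  0 < obs_marg mu P Obs info w o.
Proof.
move=> /lt_le_trans; apply; rewrite /obs_marg.
apply: le_trans (le_sum_term s _); first by apply: le_sum_term => a'; exact: traj_prob_ge0.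
by move=> s'; apply: sumr_ge0 => a' _; exact: traj_prob_ge0.
Qed.

End Kernels.

Lemma traj_mass_dist n w : (forall i, \sum_b w i b = 1) -> traj_mass n w = 1.
Proof.
move=> w1; elim: n => [|n IHn]; first exact: traj_mass0.
rewrite traj_mass_succ -[RHS]IHn; apply: eq_bigr => s _; apply: eq_bigr => o _.
by apply: eq_bigr => a _; rewrite w1 mulr1.
Qed.

End Trajectories.

Section PolicyGap.
Variables (R : realType) (S A O I : finType).
Variables (mu : S -> R) (P : S -> A -> S -> R) (Obs : S -> O -> R).
Variable info : seq (O * A) -> O -> I.
Hypothesis mu_dist : is_dist mu.
Hypothesis P_dist : forall s a, is_dist (P s a).
Hypothesis Obs_dist : forall s, is_dist (Obs s).
Variables pi1 pi2 : I -> A -> R.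
Hypothesis pi1_dist : forall i, is_dist (pi1 i).
Hypothesis pi2_dist : forall i, is_dist (pi2 i).

Definition overlap_kernel (i : I) (b : A) : R := Num.min (pi1 i b) (pi2 i b).

Lemma overlap_kernel_ge0 i b : 0 <= overlap_kernel i b.
Proof. by rewrite le_min (proj1 (pi1_dist i)) (proj1 (pi2_dist i)). Qed.

Lemma overlap_kernel_le1 i b : overlap_kernel i b <= pi1 i b.
Proof. by rewrite ge_min lexx. Qed.

Lemma overlap_kernel_le2 i b : overlap_kernel i b <= pi2 i b.
Proof. by rewrite ge_min lexx orbT. Qed.

Lemma traj_mass_overlap n :
  1 - n%:R * policy_tv pi1 pi2 <= traj_mass mu P Obs info n overlap_kernel.
Proof.
set d := policy_tv pi1 pi2.
have d_le1 : d <= 1 by apply: policy_tv_le1.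
have overlap_sum i : 1 - d <= \sum_b overlap_kernel i b.
  by rewrite sum_min_dist // lerD2l lerN2; exact: policy_tv_ge.
have c_ge0 : 0 <= 1 - d by lra.
have := traj_mass_ge_exp info mu_dist P_dist Obs_dist overlap_kernel_ge0 n c_ge0 overlap_sum.
have := @bernoulli_ineq _ (- d) n.
rewrite mulrN; lra.
Qed.

Lemma traj_expectation_gap n (f : {ffun 'I_n.+1 -> S} -> {ffun 'I_n.+1 -> O} -> R) M :
  (forall s o, 0 <= f s o) -> 0 <= M ->
  (forall s o a, 0 < traj_prob mu P Obs info pi1 s o a \/
                 0 < traj_prob mu P Obs info pi2 s o a -> f s o <= M) ->
  `|\sum_s \sum_o \sum_a traj_prob mu P Obs info pi1 s o a * f s o -
    \sum_s \sum_o \sum_a traj_prob mu P Obs info pi2 s o a * f s o|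
  <= n%:R * M * policy_tv pi1 pi2.
Proof.
move=> f_ge0 M_ge0 f_le.
have mass1 pi : (forall i, is_dist (pi i)) -> traj_mass mu P Obs info n pi = 1.
  by move=> pi_dist; apply: traj_mass_dist => // i; exact: (proj2 (pi_dist i)).
rewrite !sum_triple.
apply: le_trans (sum_gap_le
  (q := fun u => traj_prob mu P Obs info overlap_kernel u.1.1 u.1.2 u.2) _ _ _ _ _ _ _) _.
- by move=> u; apply: traj_prob_ge0 => //; exact: overlap_kernel_ge0.
- move=> u; apply: traj_prob_le_kernel => //; first exact: overlap_kernel_ge0.
  exact: overlap_kernel_le1.
- move=> u; apply: traj_prob_le_kernel => //; first exact: overlap_kernel_ge0.
  exact: overlap_kernel_le2.
- by rewrite -sum_triple; exact: mass1.
- by rewrite -sum_triple; exact: mass1.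
- by move=> u; exact: f_ge0.
- by move=> u; exact: f_le.
rewrite -sum_triple -/(traj_mass _ _ _ _ _ _) mulrAC [M * _]mulrC ler_wpM2r //.
have := traj_mass_overlap n; lra.
Qed.

End PolicyGap.

Theorem theorem2 (R : realType) (S A O I : finType) (n : nat)
    (mu : S -> R) (P : S -> A -> S -> R) (Obs : S -> O -> R)
    (info : seq (O * A) -> O -> I) (pi1 pi2 : I -> A -> R) :
  is_dist mu ->
  (forall s a, is_dist (P s a)) ->
  (forall s, is_dist (Obs s)) ->
  (forall i, is_dist (pi1 i)) ->
  (forall i, is_dist (pi2 i)) ->
  (* j = S *)
  (forall tau_star : {ffun 'I_n.+1 -> S},
     (0 < state_marg mu P Obs info pi1 tau_star \/
      0 < state_marg mu P Obs info pi2 tau_star) ->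
     (forall tau : {ffun 'I_n.+1 -> S},
        (0 < state_marg mu P Obs info pi1 tau \/
         0 < state_marg mu P Obs info pi2 tau) ->
        entropy (empirical R tau) <= entropy (empirical R tau_star)) ->
     `|J_state n mu P Obs info pi1 - J_state n mu P Obs info pi2|
       <= n.+1%:R * entropy (empirical R tau_star) * policy_tv pi1 pi2)
  /\
  (* j = O *)
  (forall tau_star : {ffun 'I_n.+1 -> O},
     (0 < obs_marg mu P Obs info pi1 tau_star \/
      0 < obs_marg mu P Obs info pi2 tau_star) ->
     (forall tau : {ffun 'I_n.+1 -> O},
        (0 < obs_marg mu P Obs info pi1 tau \/
         0 < obs_marg mu P Obs info pi2 tau) ->
        entropy (empirical R tau) <= entropy (empirical R tau_star)) ->
     `|J_obs n mu P Obs info pi1 - J_obs n mu P Obs info pi2|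
       <= n.+1%:R * entropy (empirical R tau_star) * policy_tv pi1 pi2).
Proof.
move=> mu_dist P_dist Obs_dist pi1_dist pi2_dist.
have pi1_ge0 i b : 0 <= pi1 i b by exact: (proj1 (pi1_dist i)).
have pi2_ge0 i b : 0 <= pi2 i b by exact: (proj1 (pi2_dist i)).
have gap (f : {ffun 'I_n.+1 -> S} -> {ffun 'I_n.+1 -> O} -> R) M : (forall s o, 0 <= f s o) -> 0 <= M ->
    (forall s o a, 0 < traj_prob mu P Obs info pi1 s o a \/
                   0 < traj_prob mu P Obs info pi2 s o a -> f s o <= M) ->
    `|\sum_s \sum_o \sum_a traj_prob mu P Obs info pi1 s o a * f s o -
      \sum_s \sum_o \sum_a traj_prob mu P Obs info pi2 s o a * f s o|
    <= n.+1%:R * M * policy_tv pi1 pi2.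
  move=> f_ge0 M_ge0 f_le.
  apply: le_trans
    (traj_expectation_gap mu_dist P_dist Obs_dist pi1_dist pi2_dist f_ge0 M_ge0 f_le) _.
  by apply: ler_wpM2r; [exact: policy_tv_ge0 | apply: ler_wpM2r; rewrite ?ler_nat].
have entropy_emp_ge0 (X : finType) (x : {ffun 'I_n.+1 -> X}) : 0 <= entropy (empirical R x).
  by apply: entropy_ge0 => y; exact: empirical_in01.
split=> tau_star _ tau_star_max; apply: gap => // s o a [supp|supp]; apply: tau_star_max.
- by left; exact: (state_marg_gt0 mu_dist P_dist Obs_dist pi1_ge0 supp).
- by right; exact: (state_marg_gt0 mu_dist P_dist Obs_dist pi2_ge0 supp).
- by left; exact: (obs_marg_gt0 mu_dist P_dist Obs_dist pi1_ge0 supp).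
- by right; exact: (obs_marg_gt0 mu_dist P_dist Obs_dist pi2_ge0 supp).
Qed.
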